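(* Let $G_{\lambda,k}$ be a skeleton of a connected graph $G$ with natural map $f$, and let $M=\min\{\lambda,k\}$. If two distinct vertices $x,y$ of $G_{\lambda,k}$ are not joined by an edge, then their preimages $f^{-1}(x)$ and $f^{-1}(y)$ in $G$ are $M$-disjoint.
   Context: $d$ is the graph metric on vertices. Sets $X,Y$ are $M$-disjoint if $d(a,b)>M$ for all $a\in X,b\in Y$. A set $X$ is $k$-connected if any two of its points are joined by a finite sequence in $X$ with consecutive distances $\le k$. Skeleton $G_{\lambda,k}$ (root $x_0\in V(G)$, scale $\lambda\ge1$, connectivity $k\ge1$): layers $A_{N,\lambda}=\{x: N\lambda<d(x,x_0)\le(N+1)\lambda\}$, $N\in\mathbb Z$; blocks are the maximal $k$-connected subsets of layers; $G_{\lambda,k}$ has a vertex per block and an edge between two blocks iff an edge of $G$ joins a vertex of one to a vertex of the other. The natural map $f$ sends each vertex of $G$ to its block. *)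

From Stdlib Require Import Reals ZArith ClassicalEpsilon.
Open Scope R_scope.
Set Implicit Arguments.

Section Graph.
Variable V : Type.
Variable adj : V -> V -> Prop.

Inductive walk : V -> V -> nat -> Prop :=
  | walk0 : forall x, walk x x 0
  | walkS : forall x y z n, adj x y -> walk y z n -> walk x z (S n).

Definition symmetric_graph : Prop := forall x y, adj x y -> adj y x.

Definition connected_graph : Prop := forall x y, exists n, walk x y n.

(* graph metric: the length of a shortest walk (meaningful for connected graphs) *)
Definition gdist (x y : V) : nat :=
  epsilon (inhabits 0%nat)
    (fun n => walk x y n /\ forall m, walk x y m -> (n <= m)%nat).

Definition M_disjoint (M : R) (X Y : V -> Prop) : Prop :=
  forall a b, X a -> Y b -> INR (gdist a b) > M.

Inductive kchain (k : R) (X : V -> Prop) : V -> V -> Prop :=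
  | kchain0 : forall x, X x -> kchain k X x x
  | kchainS : forall x y z, X x -> INR (gdist x y) <= k -> kchain k X y z ->
              kchain k X x z.

Definition k_connected (k : R) (X : V -> Prop) : Prop :=
  forall x y, X x -> X y -> kchain k X x y.

Section Skeleton.
Variables (x0 : V) (lambda k : R).

Definition layer (N : Z) : V -> Prop :=
  fun x => IZR N * lambda < INR (gdist x x0) <= (IZR N + 1) * lambda.

Definition is_block (B : V -> Prop) : Prop :=
  (exists v, B v) /\
  exists N : Z,
    (forall v, B v -> layer N v) /\ k_connected k B /\
    (forall C : V -> Prop, (forall v, C v -> layer N v) -> k_connected k C ->
       (forall v, B v -> C v) -> C = B).

(* vertices of G_{lambda,k} are blocks; adjacency of blocks *)
Definition skel_adj (B1 B2 : V -> Prop) : Prop :=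
  exists a b, B1 a /\ B2 b /\ adj a b.

Definition natmap (v : V) : V -> Prop :=
  epsilon (inhabits (fun _ : V => False)) (fun B => is_block B /\ B v).

Definition preimage (B : V -> Prop) : V -> Prop := fun v => natmap v = B.

End Skeleton.
End Graph.

(* Let a lie in the block B1 of layer N1 and b in the block B2 of layer N2, with
   d(a,b) <= min(lambda, k).  Since the distances to the root differ by at most lambda,
   |N1 - N2| <= 1.  If N1 = N2, then b is k-close to a inside their common layer, so both
   blocks are the k-component of a in that layer, i.e. B1 = B2.  If N2 = N1 + 1, a
   geodesic from a to b leaves the ball of radius (N1+1) lambda through some edge p q;
   as lambda >= 1, p lies in layer N1 and q in layer N1 + 1, and both are k-close to
   a resp. b, hence p is in B1 and q in B2, so B1 and B2 are adjacent. *)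
From Stdlib Require Import Reals ZArith Lra Lia Wf_nat.
From Stdlib Require Import Classical ClassicalEpsilon FunctionalExtensionality PropExtensionality.
Open Scope R_scope.
Set Implicit Arguments.

Section Skeleton.
Variable V : Type.
Variable adj : V -> V -> Prop.
Hypothesis Hsym : symmetric_graph adj.
Hypothesis Hconn : connected_graph adj.

Lemma walk_app x y z n m : walk adj x y n -> walk adj y z m -> walk adj x z (n + m).
Proof. induction 1; intros; simpl; auto. econstructor; eauto. Qed.

Lemma walk_sym x y n : walk adj x y n -> walk adj y x n.
Proof.
  induction 1 as [x | x y z n Hxy _ IH]; [constructor|].
  rewrite <- Nat.add_1_r. apply walk_app with y; auto.
  econstructor; [apply Hsym; exact Hxy | constructor].
Qed.

Lemma walk_crossing (P : V -> Prop) x y n : walk adj x y n -> ~ P x -> P y ->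
  exists p q i j, walk adj x p i /\ adj p q /\ walk adj q y j /\ ~ P p /\ P q /\
    (i + S j = n)%nat.
Proof.
  induction 1 as [x | x y z n Hxy Hyz IH]; intros Hx Hz; [contradiction|].
  destruct (classic (P y)) as [Hy | Hy].
  - exists x, y, 0%nat, n. repeat split; auto. constructor.
  - destruct (IH Hy Hz) as (p & q & i & j & Hyp & Hpq & Hqz & Hp & Hq & Hn).
    exists p, q, (S i), j. repeat split; auto.
    + econstructor; eauto.
    + lia.
Qed.

Lemma gdist_spec x y :
  walk adj x y (gdist adj x y) /\ forall m, walk adj x y m -> (gdist adj x y <= m)%nat.
Proof.
  unfold gdist. apply epsilon_spec.
  destruct (dec_inh_nat_subset_has_unique_least_element (walk adj x y))
    as (n & Hn & _); [intro; apply classic | apply Hconn |].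
  exists n; exact Hn.
Qed.

Lemma walk_gdist x y : walk adj x y (gdist adj x y).
Proof. apply gdist_spec. Qed.

Lemma gdist_le x y n : walk adj x y n -> INR (gdist adj x y) <= INR n.
Proof. intro Hw. apply le_INR, (proj2 (gdist_spec x y)), Hw. Qed.

Lemma gdist_sym x y : gdist adj x y = gdist adj y x.
Proof.
  apply Nat.le_antisymm; apply (proj2 (gdist_spec _ _)), walk_sym, walk_gdist.
Qed.

Lemma gdist_triangle x y z :
  INR (gdist adj x z) <= INR (gdist adj x y) + INR (gdist adj y z).
Proof. rewrite <- plus_INR. apply gdist_le, walk_app with y; apply walk_gdist. Qed.

Lemma gdist_adj x y : adj x y -> INR (gdist adj x y) <= 1.
Proof. intro Hxy. apply (gdist_le (n := 1)). econstructor; [exact Hxy | constructor]. Qed.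

Variable k : R.

Lemma kchain_start X x y : kchain adj k X x y -> X x.
Proof. destruct 1; auto. Qed.

Lemma kchain_trans X x y z :
  kchain adj k X x y -> kchain adj k X y z -> kchain adj k X x z.
Proof. induction 1; intros; auto. econstructor; eauto. Qed.

Lemma kchain_mono (X Y : V -> Prop) x y :
  (forall v, X v -> Y v) -> kchain adj k X x y -> kchain adj k Y x y.
Proof. intros HXY. induction 1; econstructor; eauto. Qed.

Lemma kchain_near X x y : X x -> X y -> INR (gdist adj x y) <= k -> kchain adj k X x y.
Proof. intros. econstructor; eauto. constructor; auto. Qed.

Lemma kchain_sym X x y : kchain adj k X x y -> kchain adj k X y x.
Proof.
  induction 1 as [x Hx | x y z Hx Hxy Hyz IH]; [constructor; auto|].
  apply kchain_trans with y; auto.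
  apply kchain_near; [eapply kchain_start; eauto | auto | rewrite gdist_sym; auto].
Qed.

Lemma kchain_within X Y x z : kchain adj k X x z ->
  (forall w, kchain adj k X w z -> Y w) -> kchain adj k Y x z.
Proof.
  induction 1 as [x Hx | x y z Hx Hxy Hyz IH]; intros HY.
  - constructor. apply HY. constructor; auto.
  - econstructor; eauto. apply HY. econstructor; eauto.
Qed.

Definition component (X : V -> Prop) (v : V) : V -> Prop := fun w => kchain adj k X w v.

Lemma component_k_connected X v : k_connected adj k (component X v).
Proof.
  intros x y Hx Hy. apply kchain_within with X.
  - apply kchain_trans with v; [exact Hx | apply kchain_sym, Hy].
  - intros w Hw. apply kchain_trans with y; assumption.
Qed.

Lemma component_near X v u :
  X u -> X v -> INR (gdist adj u v) <= k -> component X v u.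
Proof. apply kchain_near. Qed.

Lemma component_eq X v w : component X v w -> component X w = component X v.
Proof.
  intro Hwv. apply functional_extensionality; intro u.
  apply propositional_extensionality; unfold component; split; intro Hu.
  - apply kchain_trans with w; assumption.
  - apply kchain_trans with v; [assumption | apply kchain_sym, Hwv].
Qed.

Variables (x0 : V) (lambda : R).
Hypothesis Hl : 1 <= lambda.

Lemma layer_exists v : exists N, layer adj x0 lambda N v.
Proof.
  set (r := INR (gdist adj v x0) / lambda).
  destruct (archimed (- r)) as [H1 H2].
  exists (- up (- r))%Z. unfold layer. rewrite opp_IZR.
  replace (INR (gdist adj v x0)) with (r * lambda) by (unfold r; field; lra).
  split; nra.
Qed.

Lemma layer_index_le_succ N N' a b :
  layer adj x0 lambda N a -> layer adj x0 lambda N' b ->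
  INR (gdist adj a b) <= lambda -> (N' <= N + 1)%Z.
Proof.
  unfold layer; intros La Lb Hd.
  assert (Hba := gdist_triangle b a x0). rewrite (gdist_sym b a) in Hba.
  assert (HN : IZR N' < IZR (N + 2)) by (rewrite plus_IZR; nra).
  apply lt_IZR in HN. lia.
Qed.

Lemma component_is_block N v :
  layer adj x0 lambda N v -> is_block adj x0 lambda k (component (layer adj x0 lambda N) v).
Proof.
  intro Lv. split; [exists v; constructor; exact Lv|].
  exists N. split; [|split].
  - intros w Hw. eapply kchain_start; eauto.
  - apply component_k_connected.
  - intros C HC Cconn Hsub.
    assert (Cv : C v) by (apply Hsub; constructor; exact Lv).
    apply functional_extensionality; intro w.
    apply propositional_extensionality; split; intro Hw; [|apply Hsub, Hw].
    apply kchain_mono with C; [exact HC | apply Cconn; assumption].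
Qed.

Lemma natmap_block v : is_block adj x0 lambda k (natmap adj x0 lambda k v) /\
  natmap adj x0 lambda k v v.
Proof.
  unfold natmap. apply epsilon_spec.
  destruct (layer_exists v) as [N Lv].
  exists (component (layer adj x0 lambda N) v).
  split; [apply component_is_block, Lv | constructor; exact Lv].
Qed.

Lemma block_eq_component B v : is_block adj x0 lambda k B -> B v ->
  exists N, layer adj x0 lambda N v /\ B = component (layer adj x0 lambda N) v.
Proof.
  intros [_ (N & HB & Bconn & Bmax)] Bv.
  exists N. split; [apply HB, Bv|].
  symmetry. apply Bmax.
  - intros w Hw. eapply kchain_start; eauto.
  - apply component_k_connected.
  - intros w Hw. apply kchain_mono with B; [exact HB | apply Bconn; assumption].
Qed.

Lemma skel_adj_sym B1 B2 : skel_adj adj B1 B2 -> skel_adj adj B2 B1.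
Proof. intros (a & b & Ha & Hb & Hab). exists b, a. auto. Qed.

Lemma skel_adj_adjacent_layers N a b :
  layer adj x0 lambda N a -> layer adj x0 lambda (N + 1) b -> INR (gdist adj a b) <= k ->
  skel_adj adj (component (layer adj x0 lambda N) a)
               (component (layer adj x0 lambda (N + 1)) b).
Proof.
  intros La Lb Hd. pose proof Lb as Lb'. unfold layer in La, Lb'. rewrite plus_IZR in Lb'.
  set (far := fun v => (IZR N + 1) * lambda < INR (gdist adj v x0)).
  destruct (walk_crossing far (walk_gdist a b)) as (p & q & i & j & Hap & Hpq & Hqb & Hp & Hq & Hn);
    [unfold far; lra | unfold far; lra |].
  unfold far in Hp, Hq. apply Rnot_lt_le in Hp.
  assert (Hqp : INR (gdist adj q x0) <= 1 + INR (gdist adj p x0)).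
  { assert (Hqp := gdist_triangle q p x0). pose proof (gdist_adj (Hsym Hpq)). lra. }
  assert (Hi : INR i <= k) by (apply Rle_trans with (2 := Hd), le_INR; lia).
  assert (Hj : INR j <= k) by (apply Rle_trans with (2 := Hd), le_INR; lia).
  exists p, q. split; [|split; [|exact Hpq]]; apply component_near.
  - unfold layer. split; nra.
  - exact La.
  - rewrite gdist_sym. apply Rle_trans with (2 := Hi), gdist_le, Hap.
  - unfold layer. rewrite plus_IZR. split; nra.
  - exact Lb.
  - apply Rle_trans with (2 := Hj), gdist_le, Hqb.
Qed.

End Skeleton.

Theorem lemma4 (V : Type) (adj : V -> V -> Prop)
  (Hsym : symmetric_graph adj) (Hconn : connected_graph adj)
  (x0 : V) (lambda k : R) (Hl : 1 <= lambda) (Hk : 1 <= k)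
  (B1 B2 : V -> Prop)
  (HB1 : is_block adj x0 lambda k B1) (HB2 : is_block adj x0 lambda k B2)
  (Hne : B1 <> B2) (Hnadj : ~ skel_adj adj B1 B2) :
  M_disjoint adj (Rmin lambda k)
    (preimage adj x0 lambda k B1) (preimage adj x0 lambda k B2).
Proof.
  intros a b Pa Pb. apply Rnot_le_gt; intro Hd.
  assert (Hdl := Rle_trans _ _ _ Hd (Rmin_l lambda k)).
  assert (Hdk := Rle_trans _ _ _ Hd (Rmin_r lambda k)).
  destruct (natmap_block Hsym Hconn k x0 Hl a) as [_ Ha]. rewrite Pa in Ha.
  destruct (natmap_block Hsym Hconn k x0 Hl b) as [_ Hb]. rewrite Pb in Hb.
  destruct (block_eq_component Hsym Hconn a HB1 Ha) as (N1 & La & ->).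
  destruct (block_eq_component Hsym Hconn b HB2 Hb) as (N2 & Lb & ->).
  pose proof (gdist_sym Hsym Hconn a b) as Hba.
  assert (N2 <= N1 + 1)%Z by exact (layer_index_le_succ Hsym Hconn La Lb Hdl).
  assert (N1 <= N2 + 1)%Z.
  { apply (layer_index_le_succ Hsym Hconn Lb La). rewrite <- Hba; exact Hdl. }
  destruct (Z.lt_total N1 N2) as [HN | [<- | HN]].
  - replace N2 with (N1 + 1)%Z in * by lia.
    apply Hnadj, (skel_adj_adjacent_layers Hsym Hconn Hl La Lb Hdk).
  - apply Hne. symmetry. apply (component_eq Hsym Hconn), component_near; auto.
    rewrite <- Hba; exact Hdk.
  - replace N1 with (N2 + 1)%Z in * by lia.
    apply Hnadj, (skel_adj_sym Hsym), (skel_adj_adjacent_layers Hsym Hconn Hl Lb La).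
    rewrite <- Hba; exact Hdk.
Qed.
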